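(* Let $R$ be a commutative ring with $1\neq 0$, $M$ an $R$-module, and $S\subseteq T$ multiplicatively closed subsets of $R$. Then every $S$-quasi-copure submodule of $M$ is a $T$-quasi-copure submodule of $M$, i.e., $C^{S}_{q}(M)\subseteq C^{T}_{q}(M)$.
   Context: All rings are commutative with $1\neq 0$ and all modules are unital. A multiplicatively closed subset (m.c.s.) $S$ of $R$ is a subset with $0\notin S$, $1\in S$, and $ss'\in S$ for all $s,s'\in S$. For an ideal $I$ and submodule $L$, $(L:_M I)=\{m\in M: Im\subseteq L\}$, $(0:_M I)=\{m\in M: Im=0\}$, $(L:_R M)=\{r\in R: rM\subseteq L\}$. A submodule $P$ of $M$ with $(P:_R M)\cap S=\emptyset$ is $S$-prime if there exists $s\in S$ such that whenever $am\in P$ ($a\in R$, $m\in M$), then $sa\in(P:_R M)$ or $sm\in P$. A submodule $L$ of $M$ is $S$-copure if there exists $s\in S$ such that $s(L:_M I)\subseteq L+(0:_M I)$ for every ideal $I$ of $R$. A submodule $N$ of $M$ is $S$-quasi-copure if every $S$-prime submodule of $M$ containing $N$ is $S$-copure; $C^{S}_{q}(M)$ denotes the set of $S$-quasi-copure submodules of $M$. *)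

From mathcomp Require Import all_boot all_algebra.
Set Implicit Arguments. Unset Strict Implicit. Unset Printing Implicit Defensive.
Import GRing.Theory.
Local Open Scope ring_scope.

Section ModuleDefs.
Variables (R : comNzRingType) (M : lmodType R).

Definition is_submodule (L : M -> Prop) : Prop :=
  [/\ L 0, (forall x y, L x -> L y -> L (x + y)) & (forall (r : R) x, L x -> L (r *: x))].

Definition is_ideal (I : R -> Prop) : Prop :=
  [/\ I 0, (forall a b, I a -> I b -> I (a + b)) & (forall r a, I a -> I (r * a))].

Definition is_mcs (S : R -> Prop) : Prop :=
  [/\ ~ S 0, S 1 & (forall s s', S s -> S s' -> S (s * s'))].

Definition colon_RM (L : M -> Prop) : R -> Prop := fun r => forall m : M, L (r *: m).
Definition colon_MI (L : M -> Prop) (I : R -> Prop) : M -> Prop :=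
  fun m => forall a, I a -> L (a *: m).
Definition ann_MI (I : R -> Prop) : M -> Prop := fun m => forall a, I a -> a *: m = 0.

Definition S_prime (S : R -> Prop) (P : M -> Prop) : Prop :=
  [/\ is_submodule P,
      (forall r, colon_RM P r -> ~ S r) &
      exists2 s, S s & forall (a : R) (m : M), P (a *: m) ->
                         colon_RM P (s * a) \/ P (s *: m)].

Definition S_copure (S : R -> Prop) (L : M -> Prop) : Prop :=
  is_submodule L /\
  exists2 s, S s & forall I : R -> Prop, is_ideal I ->
    forall m, colon_MI L I m ->
      exists l, exists n, [/\ L l, ann_MI I n & s *: m = l + n].

Definition S_quasi_copure (S : R -> Prop) (N : M -> Prop) : Prop :=
  is_submodule N /\
  forall P : M -> Prop, S_prime S P -> (forall x, N x -> P x) -> S_copure S P.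

End ModuleDefs.

From mathcomp Require Import all_boot all_algebra.
Local Open Scope ring_scope.
Import GRing.Theory.
Set Implicit Arguments. Unset Strict Implicit. Unset Printing Implicit Defensive.

(* Let P be a T-prime submodule of M containing N, with
   T-prime witness t.  The residual (P :_M t) = {m | t m \in P} contains N,
   and it is S-prime (with witness 1): the primeness of P is used twice to
   strip the factor t, and (P :_M t) :_R M can meet S only if P :_R M meets T.
   Since N is S-quasi-copure, (P :_M t) is S-copure with some witness s;
   multiplying the copure decomposition by t shows that P itself is T-copure
   with witness t s. *)

Section Residual.
Variables (R : comNzRingType) (M : lmodType R).

Definition residual (P : M -> Prop) (t : R) : M -> Prop := fun m => P (t *: m).

Lemma residual_submodule (P : M -> Prop) (t : R) :
  is_submodule P -> is_submodule (residual P t).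
Proof.
case=> P0 PD PZ; split; rewrite /residual ?scaler0 //.
  by move=> x y Px Py; rewrite scalerDr; apply: PD.
by move=> r x Px; rewrite scalerA mulrC -scalerA; apply: PZ.
Qed.

Lemma residual_contains (P N : M -> Prop) (t : R) :
  is_submodule P -> (forall x, N x -> P x) -> forall x, N x -> residual P t x.
Proof. by case=> _ _ PZ NP x /NP; apply: PZ. Qed.

Lemma colon_residual (P : M -> Prop) (t r : R) :
  colon_RM (residual P t) r <-> colon_RM P (t * r).
Proof.
by split=> Hr m; [rewrite -scalerA; apply: Hr | rewrite /residual scalerA].
Qed.

Lemma T_prime_residual_S_prime (S T : R -> Prop) (P : M -> Prop) (t : R) :
  is_mcs S -> is_mcs T -> (forall r, S r -> T r) ->
  is_submodule P -> (forall r, colon_RM P r -> ~ T r) -> T t ->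
  (forall (a : R) (m : M), P (a *: m) -> colon_RM P (t * a) \/ P (t *: m)) ->
  S_prime S (residual P t).
Proof.
move=> [_ S1 _] [_ _ TM] hST hP Pcol Tt Pt.
split; first exact: residual_submodule.
  move=> r /colon_residual Htr Sr.
  by apply: (Pcol _ Htr); apply: (TM) => //; apply: hST.
exists 1 => // a m; rewrite /residual scalerA mulrC -scalerA => /Pt [Hta|Httm].
  by left; apply/colon_residual; rewrite mul1r.
have /Pt [Httt|] : P ((t * t) *: m) by rewrite -scalerA.
  by exfalso; apply: (Pcol _ Httt); apply: (TM) => //; apply: (TM).
by rewrite scale1r; right.
Qed.

(* If (P :_M t) is S-copure with witness s, then P is T-copure with witness
   t s: multiply s m = l + n by t, with t l \in P and t n \in (0 :_M I). *)
Lemma copure_of_residual (S T : R -> Prop) (P : M -> Prop) (t : R) :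
  is_mcs T -> (forall r, S r -> T r) -> T t ->
  is_submodule P -> S_copure S (residual P t) -> S_copure T P.
Proof.
move=> [_ _ TM] hST Tt hP [_ [s Ss Hs]]; split=> //.
exists (t * s); first by apply: (TM) => //; apply: hST.
move=> I hI m Hm.
have HmQ : colon_MI (residual P t) I m.
  by move=> a Ia; case: hP => _ _ PZ; apply: PZ; apply: Hm.
have [l [n [Ql Nn E]]] := Hs I hI m HmQ.
exists (t *: l), (t *: n); split => //.
  by move=> a Ia; rewrite scalerA mulrC -scalerA Nn // scaler0.
by rewrite -scalerA E scalerDr.
Qed.

End Residual.

Theorem theorem3p5 (R : comNzRingType) (M : lmodType R) (S T : R -> Prop)
  (hS : is_mcs S) (hT : is_mcs T) (hST : forall r, S r -> T r)
  (N : M -> Prop) :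
  S_quasi_copure S N -> S_quasi_copure T N.
Proof.
case=> hN HN; split=> // P [hP Pcol [t Tt Pt]] NP.
have Qprime : S_prime S (residual P t).
  exact: (T_prime_residual_S_prime hS hT hST hP Pcol Tt Pt).
have Qcopure := HN _ Qprime (residual_contains t hP NP).
exact: (copure_of_residual hT hST Tt hP Qcopure).
Qed.
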